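(* The edge generating series of the Fibonacci posets is $$\sum_{n\ge0}\ell(\mathcal{F}_n)x^n=\frac{x^2}{(1-x-x^2)^2},$$ and for every $n\ge0$, $\ell(\mathcal{F}_n)=\frac{nL_n-F_n}{5}$. Moreover $\ell(\mathcal{F}_n)\sim\frac n5\varphi^n$ and $i(\mathcal{F}_n)\sim\frac{n}{\sqrt5\,\varphi}$, where $\varphi=(1+\sqrt5)/2$.
   Context: Steps: $U=(1,1)$, $D=(1,-1)$, $H=(1,0)$. A Fibonacci path of length $n$ is a lattice path from $(0,0)$ to $(n,0)$ with steps $U,D,H$ that stays in the strip $0\le y\le1$ and whose $H$ steps all lie on the $x$-axis. $\mathcal{F}_n$ is the set of Fibonacci paths of length $n$, partially ordered by $\gamma_1\le\gamma_2$ iff $\gamma_1$ lies weakly below $\gamma_2$. $\ell(P)$ is the number of edges (covering pairs) of the Hasse diagram of a finite poset $P$ and $i(P)=\ell(P)/|P|$. $F_n$ are the Fibonacci numbers ($F_0=0$, $F_1=1$, $F_{n+2}=F_{n+1}+F_n$) and $L_n$ the Lucas numbers ($L_0=2$, $L_1=1$, $L_{n+2}=L_{n+1}+L_n$). $a_n\sim b_n$ means $a_n/b_n\to1$. *)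

From Stdlib Require Import Reals Lra Lia Arith List Bool.
Import ListNotations.
Open Scope R_scope.

(** Steps U=(1,1), D=(1,-1), H=(1,0). A path is its word of steps. *)
Inductive step : Set := U | D | H.

Definition step_eqb (a b : step) : bool :=
  match a, b with
  | U, U | D, D | H, H => true
  | _, _ => false
  end.

(** [fib_ok h w]: starting at height [h], the path [w] stays in the strip
    0 <= y <= 1, every H step lies on the x-axis, and it ends on the x-axis. *)
Fixpoint fib_ok (h : nat) (w : list step) : bool :=
  match w with
  | [] => Nat.eqb h 0
  | U :: w' => Nat.eqb h 0 && fib_ok 1 w'
  | D :: w' => Nat.eqb h 1 && fib_ok 0 w'
  | H :: w' => Nat.eqb h 0 && fib_ok 0 w'
  end.

(** Heights of the path at the integer abscissae 0,1,...,length w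
    (integer heights, since the path stays at y in {0,1}, i.e. never goes
    below 0 when fib_ok holds; D from height 0 never occurs). *)
Fixpoint heights (h : nat) (w : list step) : list nat :=
  h :: match w with
       | [] => []
       | U :: w' => heights (S h) w'
       | D :: w' => heights (Nat.pred h) w'
       | H :: w' => heights h w'
       end.

Fixpoint words (n : nat) : list (list step) :=
  match n with
  | O => [[]]
  | S m => flat_map (fun w => [U :: w; D :: w; H :: w]) (words m)
  end.

Definition fib_paths (n : nat) : list (list step) :=
  filter (fib_ok 0) (words n).

(** g1 <= g2 iff g1 lies weakly below g2. Both paths are piecewise linear
    with vertices at integer abscissae, so this is the pointwise comparison
    of heights at the integer points. *)
Fixpoint list_leb (a b : list nat) : bool :=
  match a, b with
  | [], [] => true
  | x :: a', y :: b' => Nat.leb x y && list_leb a' b'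
  | _, _ => false
  end.

Definition path_le (g1 g2 : list step) : bool :=
  list_leb (heights 0 g1) (heights 0 g2).

Definition path_eqb (g1 g2 : list step) : bool :=
  (Nat.eqb (length g1) (length g2)) &&
  forallb (fun p => step_eqb (fst p) (snd p)) (combine g1 g2).

Definition path_lt (g1 g2 : list step) : bool :=
  path_le g1 g2 && negb (path_eqb g1 g2).

Definition covers (n : nat) (g1 g2 : list step) : bool :=
  path_lt g1 g2 &&
  forallb (fun g => negb (path_lt g1 g && path_lt g g2)) (fib_paths n).

Definition ell (n : nat) : nat :=
  length (filter (fun p => covers n (fst p) (snd p))
                 (list_prod (fib_paths n) (fib_paths n))).

Definition iF (n : nat) : R := INR (ell n) / INR (length (fib_paths n)).

Fixpoint fib (n : nat) : nat :=
  match n with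
  | O => 0%nat
  | S m => match m with O => 1%nat | S k => (fib m + fib k)%nat end
  end.

Fixpoint lucas (n : nat) : nat :=
  match n with
  | O => 2%nat
  | S m => match m with O => 1%nat | S k => (lucas m + lucas k)%nat end
  end.

Definition phi : R := (1 + sqrt 5) / 2.

Definition asymp (a b : nat -> R) : Prop := Un_cv (fun n => a n / b n) 1.

(** A Fibonacci path is a word of the grammar
    w ::= ε | H w | U D w, so F_{n+2} = H F_{n+1} ⊔ U D F_n.  Comparing
    heights blockwise shows that a covering pair of F_n either shares its
    first block (and covers after it) or is (H H w, U D w).  Counting covers
    block by block gives the recurrence
        l(F_{n+2}) = l(F_{n+1}) + l(F_n) + F_{n+1},   l(F_0) = l(F_1) = 0.
    Everything else follows from this recurrence:
    - the closed form l(F_n) = (n L_n - F_n)/5, because the difference of the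
      two sides satisfies the homogeneous Fibonacci recurrence;
    - the generating function, because a recurrence a_{n+2} = a_{n+1} + a_n
      + b_{n+1} turns Σ b_n x^n into Σ a_n x^n after division by 1 - x - x^2;
    - the asymptotics, by Binet's formulas and |ψ/φ| < 1.
    The file goes: Fibonacci words and their enumeration; the order and its
    covering relation; counting covers; Binet and the closed form;
    asymptotics; generating function; the theorem. *)

From Stdlib Require Import Reals Lra Lia Arith List Bool Permutation.
Import ListNotations.

Lemma nat_ind2 (P : nat -> Prop) :
  P 0%nat -> P 1%nat -> (forall n, P n -> P (S n) -> P (S (S n))) -> forall n, P n.
Proof.
  intros P0 P1 IH n.
  enough (P n /\ P (S n)) by tauto.
  induction n as [|n [Pn PSn]]; split; auto.
Qed.

Inductive fib_word : list step -> Prop :=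
| fw_nil : fib_word []
| fw_H : forall w, fib_word w -> fib_word (H :: w)
| fw_UD : forall w, fib_word w -> fib_word (U :: D :: w).

(** The height-1 case records that from y = 1 the only step is D. *)
Lemma fib_ok_fib_word (w : list step) :
  (fib_ok 0 w = true -> fib_word w) /\
  (fib_ok 1 w = true -> exists w', w = D :: w' /\ fib_word w').
Proof.
  induction w as [|a w [IH0 IH1]]; simpl.
  - split; intros; [constructor | discriminate].
  - destruct a; simpl; split; intro Hok; try discriminate.
    + destruct (IH1 Hok) as [w' [-> Hw]]. now constructor.
    + eauto.
    + constructor; auto.
Qed.

Lemma fib_ok_iff (w : list step) : fib_ok 0 w = true <-> fib_word w.
Proof.
  split; [apply fib_ok_fib_word|].
  induction 1; simpl; auto.
Qed.

Lemma in_words (n : nat) (w : list step) : In w (words n) <-> length w = n.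
Proof.
  revert w; induction n as [|n IH]; simpl; intro w.
  - split; [intros [<-|[]]; auto | destruct w; simpl; auto; discriminate].
  - rewrite in_flat_map. split.
    + intros [v [Hv Hin]]. apply IH in Hv.
      simpl in Hin; destruct Hin as [<-|[<-|[<-|[]]]]; simpl; lia.
    + destruct w as [|a w]; simpl; [discriminate|]. intro Hl.
      exists w; split; [apply IH; lia|]. destruct a; simpl; auto.
Qed.

Lemma NoDup_words (n : nat) : NoDup (words n).
Proof.
  induction n as [|n IH]; simpl; [repeat constructor; simpl; tauto|].
  induction (words n) as [|v l IHl]; simpl; [constructor|].
  inversion IH as [|? ? Hv Hl]; subst.
  apply (NoDup_app (l1 := [U :: v; D :: v; H :: v])).
  - repeat constructor; simpl; intuition discriminate.
  - auto.
  - intros a Ha Hb. apply in_flat_map in Hb. destruct Hb as [y [Hy Hin]].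
    simpl in Ha, Hin.
    destruct Ha as [<-|[<-|[<-|[]]]]; destruct Hin as [E|[E|[E|[]]]];
      injection E; intros; subst; try discriminate; contradiction.
Qed.

Lemma in_fib_paths (n : nat) (w : list step) :
  In w (fib_paths n) <-> length w = n /\ fib_word w.
Proof. unfold fib_paths. rewrite filter_In, in_words, fib_ok_iff. tauto. Qed.

Fixpoint fib_enum (n : nat) : list (list step) :=
  match n with
  | O => [[]]
  | S m => map (cons H) (fib_enum m) ++
           match m with O => [] | S k => map (fun w => U :: D :: w) (fib_enum k) end
  end.

Lemma fib_enum_spec (n : nat) :
  (forall w, In w (fib_enum n) <-> length w = n /\ fib_word w) /\ NoDup (fib_enum n).
Proof.
  induction n as [| |n [In0 N0] [In1 N1]] using nat_ind2.
  - split; [|repeat constructor; simpl; tauto].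
    intro w; simpl; split; [intros [<-|[]]; split; [reflexivity|constructor]|].
    intros [Hl _]; destruct w; [auto|discriminate].
  - split; [|repeat constructor; simpl; tauto].
    intro w; simpl; split; [intros [<-|[]]; split; [reflexivity|repeat constructor]|].
    intros [Hl Hw]; destruct w as [|a [|b w]]; try discriminate; inversion Hw; auto.
  - change (fib_enum (S (S n)))
      with (map (cons H) (fib_enum (S n)) ++ map (fun w => U :: D :: w) (fib_enum n)).
    split.
    + intro w. rewrite in_app_iff, !in_map_iff. split.
      * intros [[v [<- Hv]]|[v [<- Hv]]]; [apply In1 in Hv|apply In0 in Hv]; destruct Hv;
          simpl; split; try lia; constructor; auto.
      * intros [Hl Hw]. inversion Hw as [|v Hv|v Hv]; subst; simpl in Hl.
        -- discriminate.
        -- left. exists v; split; auto. apply In1; split; [lia|auto].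
        -- right. exists v; split; auto. apply In0; split; [lia|auto].
    + apply NoDup_app.
      * apply FinFun.Injective_map_NoDup; auto. intros x y E; now injection E.
      * apply FinFun.Injective_map_NoDup; auto. intros x y E; now injection E.
      * intros a Ha Hb. apply in_map_iff in Ha, Hb.
        destruct Ha as [x [<- _]]; destruct Hb as [y [E _]]; discriminate.
Qed.

Lemma fib_paths_enum (n : nat) : Permutation (fib_paths n) (fib_enum n).
Proof.
  destruct (fib_enum_spec n) as [Hin HN].
  apply NoDup_Permutation; [apply NoDup_filter, NoDup_words | exact HN |].
  intro w; rewrite Hin, in_fib_paths; tauto.
Qed.

Lemma length_fib_enum (n : nat) : length (fib_enum n) = fib (S n).
Proof.
  induction n as [| |n IH0 IH1] using nat_ind2; [reflexivity|reflexivity|].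
  change (fib_enum (S (S n)))
    with (map (cons H) (fib_enum (S n)) ++ map (fun w => U :: D :: w) (fib_enum n)).
  rewrite length_app, !length_map, IH0, IH1. simpl; lia.
Qed.

Lemma card_fib_paths (n : nat) : length (fib_paths n) = fib (S n).
Proof. rewrite (Permutation_length (fib_paths_enum n)). apply length_fib_enum. Qed.

(** How the order "weakly below" compares the first blocks of two
    Fibonacci words: the heights sequence of H w (resp. U D w) starts with
    0 (resp. 0, 1, 0) followed by that of w. *)
Lemma path_le_H_H (a b : list step) : path_le (H :: a) (H :: b) = path_le a b.
Proof. reflexivity. Qed.
Lemma path_le_UD_UD (a b : list step) : path_le (U :: D :: a) (U :: D :: b) = path_le a b.
Proof. reflexivity. Qed.
Lemma path_le_HH_UD (a b : list step) : path_le (H :: H :: a) (U :: D :: b) = path_le a b.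
Proof. reflexivity. Qed.
Lemma path_le_UD_H (a b : list step) : path_le (U :: D :: a) (H :: b) = false.
Proof. destruct b; reflexivity. Qed.
Lemma path_le_HUD_UD (a b : list step) : path_le (H :: U :: D :: a) (U :: D :: b) = false.
Proof. destruct b; reflexivity. Qed.
Lemma path_le_nil_cons (s : step) (w : list step) : path_le [] (s :: w) = false.
Proof. destruct s, w; reflexivity. Qed.
Lemma path_le_cons_nil (s : step) (w : list step) : path_le (s :: w) [] = false.
Proof. destruct s, w; reflexivity. Qed.

Lemma path_le_refl (a : list step) : path_le a a = true.
Proof.
  unfold path_le. induction (heights 0 a) as [|x l IH]; simpl; auto.
  now rewrite Nat.leb_refl.
Qed.

Lemma path_le_antisym (a b : list step) :
  fib_word a -> fib_word b -> path_le a b = true -> path_le b a = true -> a = b.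
Proof.
  intro Ha; revert b; induction Ha as [|a Ha IH|a Ha IH]; intros b Hb Lab Lba;
    destruct Hb as [|b Hb|b Hb]; auto;
    try solve [ rewrite path_le_nil_cons in Lab; discriminate
              | rewrite path_le_cons_nil in Lab; discriminate
              | rewrite path_le_UD_H in Lab; discriminate
              | rewrite path_le_UD_H in Lba; discriminate ].
  - rewrite path_le_H_H in Lab, Lba. f_equal; auto.
  - rewrite path_le_UD_UD in Lab, Lba. do 2 f_equal; auto.
Qed.

Lemma path_eqb_true (a b : list step) : path_eqb a b = true <-> a = b.
Proof.
  revert b; induction a as [|x a IH]; intros [|y b];
    try (split; intro; discriminate); [split; reflexivity|].
  assert (E : path_eqb (x :: a) (y :: b) = (step_eqb x y && path_eqb a b)%bool).
  { unfold path_eqb; simpl. now destruct (length a =? length b), (step_eqb x y). }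
  rewrite E, andb_true_iff, IH. split.
  - intros [Exy ->]. now destruct x, y.
  - intro Exy; injection Exy as -> ->. destruct y; split; reflexivity.
Qed.

Definition below (a b : list step) : Prop := path_le a b = true /\ a <> b.

Lemma path_lt_below (a b : list step) : path_lt a b = true <-> below a b.
Proof.
  unfold path_lt, below. rewrite andb_true_iff, negb_true_iff.
  destruct (path_eqb a b) eqn:E.
  - apply path_eqb_true in E. split; [intros [_ F]; discriminate | tauto].
  - split; intros [L N]; split; auto. intros ->.
    now rewrite (proj2 (path_eqb_true b b) eq_refl) in E.
Qed.

Definition step_dec (x y : step) : {x = y} + {x <> y}.
Proof. decide equality. Defined.

Definition word_eqb (a b : list step) : bool :=
  if list_eq_dec step_dec a b then true else false.

Fixpoint cover (a b : list step) : bool :=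
  match a, b with
  | H :: a', H :: b' => cover a' b'
  | H :: a', U :: D :: b' =>
      match a' with H :: a'' => word_eqb a'' b' | _ => false end
  | U :: D :: a', U :: D :: b' => cover a' b'
  | _, _ => false
  end.

Lemma word_eqb_true (a b : list step) : word_eqb a b = true <-> a = b.
Proof. unfold word_eqb; destruct (list_eq_dec step_dec a b); split; congruence. Qed.

Lemma cover_sound (a b : list step) :
  fib_word a -> fib_word b -> cover a b = true ->
  below a b /\ (forall g, fib_word g -> ~ (below a g /\ below g b)).
Proof.
  intro Ha; revert b; induction Ha as [|a Ha IH|a Ha IH]; intros b Hb Hc;
    destruct Hb as [|b Hb|b Hb]; cbn in Hc;
    try solve [discriminate | destruct a as [|[] ?]; discriminate].
  - destruct (IH b Hb Hc) as [[L N] Hmin]. split.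
    + split; [rewrite path_le_H_H; auto | intro E; injection E; auto].
    + intros g Hg [[L1 N1] [L2 N2]]. destruct Hg as [|c Hc'|c Hc'].
      * rewrite path_le_cons_nil in L1; discriminate.
      * rewrite path_le_H_H in L1, L2.
        apply (Hmin c Hc'); split; split; auto; intros ->; auto.
      * rewrite path_le_UD_H in L2; discriminate.
  - destruct Ha as [|a Ha|a Ha]; try discriminate. cbn in Hc.
    apply word_eqb_true in Hc; subst a. split.
    + split; [rewrite path_le_HH_UD; apply path_le_refl | discriminate].
    + intros g Hg [[L1 N1] [L2 N2]]. destruct Hg as [|c Hc|c Hc].
      * rewrite path_le_cons_nil in L1; discriminate.
      * destruct Hc as [|c Hc|c Hc].
        -- rewrite path_le_H_H, path_le_cons_nil in L1; discriminate.
        -- rewrite !path_le_H_H in L1. rewrite path_le_HH_UD in L2.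
           apply N1. do 2 f_equal. now apply path_le_antisym.
        -- rewrite path_le_HUD_UD in L2; discriminate.
      * rewrite path_le_HH_UD in L1. rewrite path_le_UD_UD in L2.
        apply N2. do 2 f_equal. now apply path_le_antisym.
  - destruct (IH b Hb Hc) as [[L N] Hmin]. split.
    + split; [rewrite path_le_UD_UD; auto | intro E; injection E; auto].
    + intros g Hg [[L1 N1] [L2 N2]]. destruct Hg as [|c Hc'|c Hc'].
      * rewrite path_le_cons_nil in L1; discriminate.
      * rewrite path_le_UD_H in L1; discriminate.
      * rewrite path_le_UD_UD in L1, L2.
        apply (Hmin c Hc'); split; split; auto; intros ->; auto.
Qed.

Lemma cover_complete (a b : list step) :
  fib_word a -> fib_word b -> length a = length b -> below a b -> cover a b = false ->
  exists g, fib_word g /\ length g = length a /\ below a g /\ below g b.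
Proof.
  intro Ha; revert b; induction Ha as [|a Ha IH|a Ha IH]; intros b Hb Hl [L N] Hc;
    destruct Hb as [|b Hb|b Hb]; simpl in Hl; try discriminate.
  - contradiction.
  - rewrite path_le_H_H in L.
    destruct (IH b Hb ltac:(lia)) as [g [Hg [Hlg [[L1 N1] [L2 N2]]]]];
      [split; auto; intros ->; auto | exact Hc |].
    exists (H :: g). split; [constructor; auto|]. split; [simpl; lia|].
    split; split; try (rewrite path_le_H_H; auto); intro E; injection E; auto.
  - destruct Ha as [|a Ha|a Ha].
    + simpl in Hl; lia.
    + rewrite path_le_HH_UD in L. exists (H :: H :: b).
      split; [repeat constructor; auto|]. split; [simpl in *; lia|].
      split; split.
      * rewrite !path_le_H_H; auto.
      * intro E; injection E as ->. simpl in Hc.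
        rewrite (proj2 (word_eqb_true b b) eq_refl) in Hc; discriminate.
      * rewrite path_le_HH_UD; apply path_le_refl.
      * discriminate.
    + rewrite path_le_HUD_UD in L; discriminate.
  - rewrite path_le_UD_H in L; discriminate.
  - rewrite path_le_UD_UD in L.
    destruct (IH b Hb ltac:(lia)) as [g [Hg [Hlg [[L1 N1] [L2 N2]]]]];
      [split; auto; intros ->; auto | exact Hc |].
    exists (U :: D :: g). split; [constructor; auto|]. split; [simpl; lia|].
    split; split; try (rewrite path_le_UD_UD; auto); intro E; injection E; auto.
Qed.

Lemma covers_cover (n : nat) (a b : list step) :
  In a (fib_paths n) -> In b (fib_paths n) -> covers n a b = cover a b.
Proof.
  intros Ha Hb. apply in_fib_paths in Ha as [La Wa], Hb as [Lb Wb].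
  unfold covers. destruct (cover a b) eqn:Hc.
  - destruct (cover_sound a b Wa Wb Hc) as [Lt Hmin].
    apply andb_true_iff; split; [apply path_lt_below; auto|].
    apply forallb_forall. intros g Hg. apply in_fib_paths in Hg as [_ Wg].
    apply negb_true_iff. destruct (path_lt a g && path_lt g b) eqn:E; auto.
    apply andb_true_iff in E. rewrite !path_lt_below in E. now destruct (Hmin g Wg).
  - destruct (path_lt a b) eqn:Lt; auto. apply path_lt_below in Lt.
    destruct (cover_complete a b Wa Wb ltac:(lia) Lt Hc) as [g [Wg [Lg [L1 L2]]]].
    simpl. apply not_true_iff_false. rewrite forallb_forall. intro F.
    assert (Hg : In g (fib_paths n)) by (apply in_fib_paths; split; [lia | exact Wg]).
    specialize (F g Hg).
    rewrite (proj2 (path_lt_below a g) L1), (proj2 (path_lt_below g b) L2) in F.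
    discriminate.
Qed.

Definition count_rel {A B : Type} (r : A -> B -> bool) (l : list A) (m : list B) : nat :=
  length (filter (fun p => r (fst p) (snd p)) (list_prod l m)).

Lemma count_rel_rows {A B : Type} (r : A -> B -> bool) (l : list A) (m : list B) :
  count_rel r l m = list_sum (map (fun a => length (filter (r a) m)) l).
Proof.
  unfold count_rel. induction l as [|a l IH]; simpl; auto.
  rewrite filter_app, length_app, IH. f_equal.
  clear IH. induction m as [|b m IH]; simpl; auto. destruct (r a b); simpl; auto.
Qed.

Lemma count_rel_ext_in {A B : Type} (r r' : A -> B -> bool) (l : list A) (m : list B) :
  (forall a b, In a l -> In b m -> r a b = r' a b) -> count_rel r l m = count_rel r' l m.
Proof.
  intro E. unfold count_rel. f_equal. apply filter_ext_in.
  intros [a b] Hp. apply in_prod_iff in Hp as [Ha Hb]. now apply E.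
Qed.

Lemma length_filter_perm {C : Type} (f : C -> bool) (l l' : list C) :
  Permutation l l' -> length (filter f l) = length (filter f l').
Proof.
  induction 1 as [|x l l' _ IH|x y l|l l' l'' _ IH1 _ IH2]; simpl; auto.
  - destruct (f x); simpl; auto.
  - destruct (f x), (f y); simpl; auto.
  - congruence.
Qed.

Lemma count_rel_perm {A B : Type} (r : A -> B -> bool) (l l' : list A) (m m' : list B) :
  Permutation l l' -> Permutation m m' -> count_rel r l m = count_rel r l' m'.
Proof.
  intros Hl Hm. rewrite !count_rel_rows.
  rewrite (Permutation_list_sum (Permutation_map _ Hl)).
  f_equal. apply map_ext. intro a. now apply length_filter_perm.
Qed.

Lemma count_rel_app_l {A B : Type} (r : A -> B -> bool) (l1 l2 : list A) (m : list B) :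
  count_rel r (l1 ++ l2) m = (count_rel r l1 m + count_rel r l2 m)%nat.
Proof. rewrite !count_rel_rows, map_app. apply list_sum_app. Qed.

Lemma count_rel_app_r {A B : Type} (r : A -> B -> bool) (l : list A) (m1 m2 : list B) :
  count_rel r l (m1 ++ m2) = (count_rel r l m1 + count_rel r l m2)%nat.
Proof.
  rewrite !count_rel_rows. induction l as [|a l IH]; simpl; auto.
  rewrite IH, filter_app, length_app. lia.
Qed.

Lemma count_rel_map_l {A B A' : Type} (r : A' -> B -> bool) (f : A -> A')
  (l : list A) (m : list B) :
  count_rel r (map f l) m = count_rel (fun a b => r (f a) b) l m.
Proof. rewrite !count_rel_rows, map_map. reflexivity. Qed.

Lemma count_rel_map_r {A B B' : Type} (r : A -> B' -> bool) (g : B -> B')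
  (l : list A) (m : list B) :
  count_rel r l (map g m) = count_rel (fun a b => r a (g b)) l m.
Proof.
  rewrite !count_rel_rows. f_equal. apply map_ext. intro a.
  induction m as [|b m IH]; simpl; auto. destruct (r a (g b)); simpl; auto.
Qed.

Lemma count_rel_false {A B : Type} (l : list A) (m : list B) :
  count_rel (fun _ _ => false) l m = 0%nat.
Proof. unfold count_rel. now rewrite filter_false. Qed.

Lemma count_rel_diag {A : Type} (dec : forall x y : A, {x = y} + {x <> y}) (l : list A) :
  NoDup l -> count_rel (fun a b => if dec a b then true else false) l l = length l.
Proof.
  intro Hl. rewrite count_rel_rows.
  rewrite (map_ext_in _ (fun _ => 1%nat)).
  - clear Hl. induction l as [|a l IH]; [reflexivity|]. cbn [map length]. unfold list_sum in *; simpl; now rewrite IH.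
  - intros a Ha. rewrite <- (proj1 (NoDup_count_occ' dec l) Hl a Ha), <- count_occ_alt.
    unfold count_occ'. f_equal. apply filter_ext. intro b.
    destruct (dec a b), (dec b a); congruence.
Qed.

Lemma ell_count (n : nat) : ell n = count_rel cover (fib_enum n) (fib_enum n).
Proof.
  unfold ell. fold (count_rel (covers n) (fib_paths n) (fib_paths n)).
  rewrite (count_rel_ext_in _ cover) by apply covers_cover.
  apply count_rel_perm; apply fib_paths_enum.
Qed.

(** The covers from a word starting with H into a word starting with U D
    pair each word H H w with U D w, one for each word of F_n. *)
Lemma count_rel_H_UD (n : nat) :
  count_rel (fun a b => cover (H :: a) (U :: D :: b)) (fib_enum (S n)) (fib_enum n)
  = fib (S n).
Proof.
  change (fib_enum (S n)) with (map (cons H) (fib_enum n) ++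
           match n with O => [] | S k => map (fun w => U :: D :: w) (fib_enum k) end).
  rewrite count_rel_app_l, count_rel_map_l.
  replace (count_rel _ (match n with O => [] | _ => _ end) _) with 0%nat.
  - rewrite Nat.add_0_r, <- length_fib_enum.
    apply (count_rel_diag (list_eq_dec step_dec)), fib_enum_spec.
  - destruct n; [reflexivity|]. rewrite count_rel_map_l. symmetry; apply count_rel_false.
Qed.

Lemma ell_rec (n : nat) : ell (S (S n)) = (ell (S n) + ell n + fib (S n))%nat.
Proof.
  rewrite !ell_count.
  change (fib_enum (S (S n))) with
    (map (cons H) (fib_enum (S n)) ++ map (fun w => U :: D :: w) (fib_enum n)).
  rewrite count_rel_app_l, !count_rel_app_r, !count_rel_map_l, !count_rel_map_r, count_rel_H_UD.
  change (count_rel (fun a b => cover (U :: D :: a) (H :: b)) (fib_enum n) (fib_enum (S n)))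
    with (count_rel (fun _ _ : list step => false) (fib_enum n) (fib_enum (S n))).
  change (fun a b : list step => cover (H :: a) (H :: b)) with cover.
  change (fun a b : list step => cover (U :: D :: a) (U :: D :: b)) with cover.
  rewrite count_rel_false. lia.
Qed.

(** Real analysis (imported only here: Coquelicot's names would shadow the
    steps U, D, H used above). *)
From Coquelicot Require Import Coquelicot.
Open Scope R_scope.

Definition psi : R := (1 - sqrt 5) / 2.

Lemma sqrt5_sq : sqrt 5 * sqrt 5 = 5.
Proof. apply sqrt_sqrt; lra. Qed.

Lemma sqrt5_gt1 : 1 < sqrt 5.
Proof. rewrite <- sqrt_1. apply sqrt_lt_1; lra. Qed.

Lemma phi_sq : phi * phi = phi + 1.
Proof. unfold phi. pose proof sqrt5_sq. nra. Qed.

Lemma psi_sq : psi * psi = psi + 1.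
Proof. unfold psi. pose proof sqrt5_sq. nra. Qed.

Lemma phi_plus_psi : phi + psi = 1.
Proof. unfold phi, psi. field. Qed.

Lemma phi_times_psi : phi * psi = -1.
Proof. unfold phi, psi. pose proof sqrt5_sq. nra. Qed.

Lemma phi_minus_psi : phi - psi = sqrt 5.
Proof. unfold phi, psi. field. Qed.

Lemma phi_gt1 : 1 < phi.
Proof. unfold phi. pose proof sqrt5_gt1. lra. Qed.

Lemma psi_bounds : -1 < psi < 0.
Proof. unfold psi. pose proof sqrt5_gt1. pose proof sqrt5_sq. split; nra. Qed.

Definition fib_like (u : nat -> R) : Prop := forall n, u (S (S n)) = u (S n) + u n.

Lemma fib_like_ext (u v : nat -> R) :
  fib_like u -> fib_like v -> u 0%nat = v 0%nat -> u 1%nat = v 1%nat ->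
  forall n, u n = v n.
Proof.
  intros Hu Hv E0 E1 n. induction n as [| |n IH0 IH1] using nat_ind2; auto.
  now rewrite Hu, Hv, IH0, IH1.
Qed.

Lemma fib_like_binet (a b : R) : fib_like (fun n => a * phi ^ n + b * psi ^ n).
Proof.
  intro n. cbn [pow].
  replace (phi * (phi * phi ^ n)) with ((phi * phi) * phi ^ n) by ring.
  replace (psi * (psi * psi ^ n)) with ((psi * psi) * psi ^ n) by ring.
  rewrite phi_sq, psi_sq. ring.
Qed.

Lemma fib_like_fib : fib_like (fun n => INR (fib n)).
Proof. intro n. change (fib (S (S n))) with (fib (S n) + fib n)%nat. apply plus_INR. Qed.

Lemma fib_like_lucas : fib_like (fun n => INR (lucas n)).
Proof. intro n. change (lucas (S (S n))) with (lucas (S n) + lucas n)%nat. apply plus_INR. Qed.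

Lemma fib_succ_pos (n : nat) : (1 <= fib (S n))%nat.
Proof.
  induction n as [| |n IH0 IH1] using nat_ind2; [reflexivity | reflexivity |].
  change (fib (S (S (S n)))) with (fib (S (S n)) + fib (S n))%nat. lia.
Qed.

Lemma binet_fib (n : nat) : INR (fib n) = (phi ^ n - psi ^ n) / sqrt 5.
Proof.
  pose proof sqrt5_gt1 as Hs.
  transitivity (/ sqrt 5 * phi ^ n + - / sqrt 5 * psi ^ n); [|field; lra].
  apply (fib_like_ext _ _ fib_like_fib (fib_like_binet _ _)); simpl; [field; lra|].
  replace (/ sqrt 5 * (phi * 1) + - / sqrt 5 * (psi * 1)) with ((phi - psi) / sqrt 5)
    by (field; lra).
  rewrite phi_minus_psi. field; lra.
Qed.

Lemma binet_lucas (n : nat) : INR (lucas n) = phi ^ n + psi ^ n.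
Proof.
  transitivity (1 * phi ^ n + 1 * psi ^ n); [|ring].
  pose proof phi_plus_psi.
  apply (fib_like_ext _ _ fib_like_lucas (fib_like_binet _ _)); simpl; lra.
Qed.

Lemma lucas_fib (n : nat) : INR (lucas (S n)) + 2 * INR (lucas n) = 5 * INR (fib (S n)).
Proof.
  pose proof sqrt5_gt1. pose proof sqrt5_sq as E5.
  assert (Ephi : phi + 2 = sqrt 5 * phi) by (unfold phi; nra).
  assert (Epsi : psi + 2 = - (sqrt 5 * psi)) by (unfold psi; nra).
  rewrite !binet_lucas, binet_fib. cbn [pow].
  replace (phi * phi ^ n + psi * psi ^ n + 2 * (phi ^ n + psi ^ n))
    with ((phi + 2) * phi ^ n + (psi + 2) * psi ^ n) by ring.
  rewrite Ephi, Epsi. set (s := sqrt 5) in *. rewrite <- E5. field. lra.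
Qed.

(** Initial values: F_0 and F_1 are one-point posets. *)
Lemma ell_0 : ell 0 = 0%nat.
Proof. vm_compute. reflexivity. Qed.

Lemma ell_1 : ell 1 = 0%nat.
Proof. vm_compute. reflexivity. Qed.

(** Closed form l(F_n) = (n L_n - F_n) / 5: the defect
    5 l(F_n) - (n L_n - F_n) satisfies the Fibonacci recurrence (by [ell_rec]
    and [lucas_fib]) and vanishes at n = 0, 1. *)
Lemma ell_closed_form (n : nat) :
  INR (ell n) = (INR n * INR (lucas n) - INR (fib n)) / 5.
Proof.
  set (e k := 5 * INR (ell k) - (INR k * INR (lucas k) - INR (fib k))).
  assert (He : fib_like e).
  { intro k. unfold e. rewrite ell_rec, !plus_INR, !S_INR.
    rewrite fib_like_lucas, fib_like_fib. pose proof (lucas_fib k). lra. }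
  assert (Hz : fib_like (fun _ => 0)) by (intro; ring).
  pose proof (fib_like_ext e _ He Hz) as E.
  unfold e in E. rewrite ell_0, ell_1 in E. simpl in E.
  specialize (E ltac:(lra) ltac:(lra) n). lra.
Qed.

Lemma lim_inv_succ : is_lim_seq (fun n => / INR (S n)) 0.
Proof.
  apply (is_lim_seq_incr_1 (fun n => / INR n)).
  apply (is_lim_seq_inv INR p_infty is_lim_seq_INR). discriminate.
Qed.

(** n a^n -> 0 when |a| < 1, by d'Alembert's ratio test: the terms of a
    convergent series tend to 0. *)
Lemma lim_n_geom (a : R) : Rabs a < 1 -> is_lim_seq (fun n => INR n * a ^ n) 0.
Proof.
  intro Ha. destruct (Req_dec a 0) as [->|Ha0].
  { apply (is_lim_seq_ext_loc (fun _ => 0)); [|apply is_lim_seq_const].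
    exists 1%nat. intros [|n] Hn; [lia | simpl; ring]. }
  set (t n := INR (S n) * a ^ n).
  assert (Ht : forall n, t n <> 0).
  { intro n. apply Rmult_integral_contrapositive.
    split; [apply not_0_INR; lia | now apply pow_nonzero]. }
  assert (Hratio : is_lim_seq (fun n => Rabs (t (S n) / t n)) (Rabs a)).
  { apply (is_lim_seq_ext (fun n => Rabs a * (1 + / INR (S n)))).
    - intro n. unfold t. rewrite <- (Rabs_pos_eq (1 + / INR (S n))), <- Rabs_mult.
      + f_equal. rewrite (S_INR (S n)). simpl pow. field.
        split; [now apply pow_nonzero | apply not_0_INR; lia].
      + apply Rplus_le_le_0_compat; [lra | apply Rlt_le, Rinv_0_lt_compat, lt_0_INR; lia].
    - replace (Finite (Rabs a)) with (Rbar_mult (Rabs a) (1 + 0)) by (simpl; f_equal; ring).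
      apply is_lim_seq_scal_l, is_lim_seq_plus'; [apply is_lim_seq_const | apply lim_inv_succ]. }
  pose proof (ex_series_lim_0 _ (ex_series_DAlembert t (Rabs a) Ha Ht Hratio)) as Habs.
  apply is_lim_seq_abs_0 in Habs.
  apply is_lim_seq_incr_1.
  replace (Finite 0) with (Rbar_mult a 0) by (simpl; f_equal; ring).
  apply (is_lim_seq_ext (fun n => a * t n)); [intro n; unfold t; simpl; ring|].
  now apply is_lim_seq_scal_l.
Qed.

Lemma asymp_ext_loc (a b a' b' : nat -> R) :
  eventually (fun n => a n = a' n /\ b n = b' n) -> asymp a b -> asymp a' b'.
Proof.
  unfold asymp. intros [N HN] Hab. apply is_lim_seq_Reals in Hab. apply is_lim_seq_Reals.
  apply (is_lim_seq_ext_loc (fun n => a n / b n)); [|exact Hab].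
  exists N. intros n Hn. now destruct (HN n Hn) as [-> ->].
Qed.

Lemma asymp_succ (a b : nat -> R) : asymp a b -> asymp (fun n => a (S n)) (fun n => b (S n)).
Proof.
  unfold asymp. rewrite <- !is_lim_seq_Reals.
  exact (proj1 (is_lim_seq_incr_1 (fun n => a n / b n) 1)).
Qed.

Lemma asymp_quotient (a b c d : nat -> R) :
  eventually (fun n => b n <> 0 /\ c n <> 0 /\ d n <> 0) ->
  asymp a b -> asymp c d -> asymp (fun n => a n / c n) (fun n => b n / d n).
Proof.
  unfold asymp. intros [N HN] Hab Hcd. apply is_lim_seq_Reals in Hab, Hcd.
  apply is_lim_seq_Reals.
  replace 1 with (1 / 1) by field.
  apply (is_lim_seq_ext_loc (fun n => (a n / b n) / (c n / d n))).
  - exists N. intros n Hn. destruct (HN n Hn) as [Hb [Hc Hd]]. field; tauto.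
  - apply is_lim_seq_div'; auto; lra.
Qed.

Definition rho : R := psi / phi.

Lemma rho_abs : Rabs rho < 1.
Proof.
  pose proof phi_gt1. pose proof psi_bounds. unfold rho.
  apply Rabs_def1; [apply Rlt_div_l | apply Rlt_div_r]; lra.
Qed.

(** ψ^n = ρ^n φ^n: powers of ψ are negligible against those of φ. *)
Lemma psi_pow (n : nat) : psi ^ n = rho ^ n * phi ^ n.
Proof.
  rewrite <- Rpow_mult_distr. unfold rho. f_equal. field.
  pose proof phi_gt1; lra.
Qed.

Lemma asymp_fib : asymp (fun n => INR (fib n)) (fun n => phi ^ n / sqrt 5).
Proof.
  unfold asymp. apply is_lim_seq_Reals.
  apply (is_lim_seq_ext (fun n => 1 - rho ^ n)).
  - intro n. rewrite binet_fib, psi_pow.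
    pose proof sqrt5_gt1. pose proof (pow_nonzero phi n ltac:(pose proof phi_gt1; lra)).
    field; lra.
  - pose proof (is_lim_seq_minus' _ _ 1 0 (is_lim_seq_const 1) (is_lim_seq_geom rho rho_abs))
      as L.
    now rewrite Rminus_0_r in L.
Qed.

(** l(F_n) ~ (n/5) φ^n, since l(F_n) / ((n/5) φ^n) = L_n/φ^n - F_n/(n φ^n). *)
Lemma asymp_ell : asymp (fun n => INR (ell n)) (fun n => INR n / 5 * phi ^ n).
Proof.
  unfold asymp. apply is_lim_seq_Reals.
  apply (is_lim_seq_ext_loc (fun n => 1 + rho ^ n - (1 - rho ^ n) / sqrt 5 * / INR n)).
  - exists 1%nat. intros n Hn.
    rewrite ell_closed_form, binet_lucas, binet_fib, psi_pow.
    pose proof sqrt5_gt1. pose proof (pow_nonzero phi n ltac:(pose proof phi_gt1; lra)).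
    assert (INR n <> 0) by (apply not_0_INR; lia).
    field; lra.
  - pose proof (is_lim_seq_geom rho rho_abs) as G.
    pose proof (is_lim_seq_inv INR p_infty is_lim_seq_INR ltac:(discriminate)) as I.
    assert (L : is_lim_seq (fun n => 1 + rho ^ n - (1 - rho ^ n) / sqrt 5 * / INR n)
                           (1 + 0 - (1 - 0) / sqrt 5 * 0)).
    { apply is_lim_seq_minus'; [apply is_lim_seq_plus'; auto; apply is_lim_seq_const|].
      apply is_lim_seq_mult'; [|exact I].
      apply is_lim_seq_div'; [| apply is_lim_seq_const | pose proof sqrt5_gt1; lra].
      apply is_lim_seq_minus'; auto. apply is_lim_seq_const. }
    replace (1 + 0 - (1 - 0) / sqrt 5 * 0) with 1 in L by (pose proof sqrt5_gt1; field; lra). exact L.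
Qed.

(** i(F_n) = l(F_n) / F_{n+1} ~ ((n/5) φ^n) / (φ^{n+1}/√5) = n / (√5 φ). *)
Lemma asymp_iF : asymp iF (fun n => INR n / (sqrt 5 * phi)).
Proof.
  pose proof sqrt5_gt1. pose proof phi_gt1.
  apply (asymp_ext_loc (fun n => INR (ell n) / INR (fib (S n)))
                       (fun n => (INR n / 5 * phi ^ n) / (phi ^ (S n) / sqrt 5))).
  - exists 1%nat. intros n Hn. split.
    + unfold iF. now rewrite card_fib_paths.
    + pose proof (pow_nonzero phi n ltac:(lra)). pose proof sqrt5_sq as E5.
      set (s := sqrt 5) in *. rewrite <- E5. simpl pow. field; lra.
  - apply asymp_quotient; [| exact asymp_ell | exact (asymp_succ _ _ asymp_fib)].
    exists 1%nat. intros n Hn.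
    pose proof (pow_nonzero phi n ltac:(lra)). pose proof (pow_nonzero phi (S n) ltac:(lra)).
    assert (INR n <> 0) by (apply not_0_INR; lia).
    repeat split.
    + apply Rmult_integral_contrapositive; split; [|auto]. apply Rmult_integral_contrapositive; split; [auto | lra].
    + apply not_0_INR. pose proof (fib_succ_pos n). lia.
    + apply Rmult_integral_contrapositive; split; [auto | apply Rinv_neq_0_compat; lra].
Qed.

Lemma partial_sum_recurrence (a b : nat -> R) (x : R) :
  (forall n, a (S (S n)) = a (S n) + a n + b (S n)) -> forall N,
  (1 - x - x ^ 2) * sum_f_R0 (fun n => a n * x ^ n) N =
  a 0%nat + (a 1%nat - a 0%nat - b 0%nat) * x + x * sum_f_R0 (fun n => b n * x ^ n) N
  - a (S N) * x ^ S N - a N * x ^ S (S N).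
Proof.
  intros Hrec N. induction N as [|N IH]; [simpl; ring|].
  cbn [sum_f_R0]. rewrite Rmult_plus_distr_l, IH, (Hrec N). cbn [pow]. ring.
Qed.

Lemma series_recurrence (a b : nat -> R) (x B : R) :
  (forall n, a (S (S n)) = a (S n) + a n + b (S n)) ->
  1 - x - x ^ 2 <> 0 ->
  is_lim_seq (fun n => a n * x ^ n) 0 ->
  is_lim_seq (sum_f_R0 (fun n => b n * x ^ n)) B ->
  is_lim_seq (sum_f_R0 (fun n => a n * x ^ n))
             ((a 0%nat + (a 1%nat - a 0%nat - b 0%nat) * x + x * B) / (1 - x - x ^ 2)).
Proof.
  intros Hrec Hc Ha Hb. set (c := 1 - x - x ^ 2) in *.
  apply (is_lim_seq_ext
    (fun N => (a 0%nat + (a 1%nat - a 0%nat - b 0%nat) * x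
               + x * sum_f_R0 (fun n => b n * x ^ n) N
               - a (S N) * x ^ S N - x ^ 2 * (a N * x ^ N)) / c)).
  { intro N. apply (Rmult_eq_reg_l c); [|exact Hc].
    unfold c in *. rewrite (partial_sum_recurrence a b x Hrec N). 
    replace (x ^ S (S N)) with (x ^ 2 * x ^ N) by (cbn [pow]; ring). field. exact Hc. }
  pose proof (proj1 (is_lim_seq_incr_1 _ 0) Ha) as Ha1.
  assert (L : is_lim_seq
    (fun N => (a 0%nat + (a 1%nat - a 0%nat - b 0%nat) * x
               + x * sum_f_R0 (fun n => b n * x ^ n) N
               - a (S N) * x ^ S N - x ^ 2 * (a N * x ^ N)) / c)
    ((a 0%nat + (a 1%nat - a 0%nat - b 0%nat) * x + x * B - 0 - x ^ 2 * 0) / c)).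
  { apply is_lim_seq_div'; [| apply is_lim_seq_const | exact Hc].
    apply is_lim_seq_minus'; [apply is_lim_seq_minus'; [|exact Ha1]|].
    - apply is_lim_seq_plus'; [apply is_lim_seq_const|].
      apply (is_lim_seq_scal_l _ x B Hb).
    - apply (is_lim_seq_scal_l _ (x ^ 2) 0 Ha). }
  now rewrite Rmult_0_r, !Rminus_0_r in L.
Qed.

Lemma quadratic_factor (x : R) : 1 - x - x ^ 2 = (1 - phi * x) * (1 - psi * x).
Proof.
  replace ((1 - phi * x) * (1 - psi * x)) with (1 - (phi + psi) * x + (phi * psi) * x ^ 2)
    by ring.
  rewrite phi_plus_psi, phi_times_psi. ring.
Qed.

Lemma disc_bounds (x : R) : Rabs x < / phi -> Rabs (phi * x) < 1 /\ Rabs (psi * x) < 1.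
Proof.
  intro Hx. pose proof phi_gt1. pose proof psi_bounds.
  assert (Hinv : / phi < 1) by (rewrite <- Rinv_1; apply Rinv_lt_contravar; lra).
  rewrite !Rabs_mult, (Rabs_pos_eq phi), (Rabs_left psi) by lra.
  pose proof (Rabs_pos x). split.
  - apply (Rmult_lt_compat_l phi) in Hx; [|lra]. now rewrite Rinv_r in Hx by lra.
  - nra.
Qed.

Lemma quadratic_pos (x : R) : Rabs x < / phi -> 0 < 1 - x - x ^ 2.
Proof.
  intro Hx. destruct (disc_bounds x Hx) as [Hphi Hpsi].
  apply Rabs_def2 in Hphi, Hpsi. rewrite quadratic_factor.
  apply Rmult_lt_0_compat; lra.
Qed.

Lemma fib_term_lim (x : R) : Rabs x < / phi -> is_lim_seq (fun n => INR (fib n) * x ^ n) 0.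
Proof.
  intro Hx. destruct (disc_bounds x Hx) as [Hphi Hpsi]. pose proof sqrt5_gt1.
  apply (is_lim_seq_ext (fun n => ((phi * x) ^ n - (psi * x) ^ n) / sqrt 5)).
  - intro n. rewrite binet_fib, !Rpow_mult_distr. field. lra.
  - replace (Finite 0) with (Finite ((0 - 0) / sqrt 5)) by (f_equal; field; lra).
    apply is_lim_seq_div'; [|apply is_lim_seq_const | lra].
    apply is_lim_seq_minus'; apply is_lim_seq_geom; auto.
Qed.

Lemma ell_term_lim (x : R) : Rabs x < / phi -> is_lim_seq (fun n => INR (ell n) * x ^ n) 0.
Proof.
  intro Hx. destruct (disc_bounds x Hx) as [Hphi Hpsi].
  apply (is_lim_seq_ext (fun n => (INR n * (phi * x) ^ n + INR n * (psi * x) ^ n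
                                   - INR (fib n) * x ^ n) / 5)).
  - intro n. rewrite ell_closed_form, binet_lucas, !Rpow_mult_distr. field.
  - replace (Finite 0) with (Finite ((0 + 0 - 0) / 5)) by (f_equal; field).
    apply is_lim_seq_div'; [|apply is_lim_seq_const | lra].
    apply is_lim_seq_minus'; [|now apply fib_term_lim].
    apply is_lim_seq_plus'; now apply lim_n_geom.
Qed.

Lemma fib_gf (x : R) : Rabs x < / phi ->
  is_lim_seq (sum_f_R0 (fun n => INR (fib n) * x ^ n)) (x / (1 - x - x ^ 2)).
Proof.
  intro Hx. pose proof (quadratic_pos x Hx).
  replace (x / (1 - x - x ^ 2))
    with ((INR (fib 0) + (INR (fib 1) - INR (fib 0) - 0) * x + x * 0) / (1 - x - x ^ 2))
    by (simpl; field; lra).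
  apply (series_recurrence (fun n => INR (fib n)) (fun _ => 0)).
  - intro n. rewrite fib_like_fib. ring.
  - lra.
  - now apply fib_term_lim.
  - apply (is_lim_seq_ext (fun _ => 0)); [|apply is_lim_seq_const].
    intro N. symmetry. apply sum_eq_R0. intros; ring.
Qed.

Lemma ell_gf (x : R) : Rabs x < / phi ->
  is_lim_seq (sum_f_R0 (fun n => INR (ell n) * x ^ n)) (x ^ 2 / (1 - x - x ^ 2) ^ 2).
Proof.
  intro Hx. pose proof (quadratic_pos x Hx).
  replace (x ^ 2 / (1 - x - x ^ 2) ^ 2)
    with ((INR (ell 0) + (INR (ell 1) - INR (ell 0) - INR (fib 0)) * x
           + x * (x / (1 - x - x ^ 2))) / (1 - x - x ^ 2))
    by (rewrite ell_0, ell_1; simpl; field; lra).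
  apply (series_recurrence (fun n => INR (ell n)) (fun n => INR (fib n))).
  - intro n. now rewrite ell_rec, !plus_INR.
  - lra.
  - now apply ell_term_lim.
  - now apply fib_gf.
Qed.

Theorem mainTheorem16 :
  (forall x : R, Rabs x < / phi ->
     infinite_sum (fun n => INR (ell n) * x ^ n)
                  (x ^ 2 / (1 - x - x ^ 2) ^ 2)) /\
  (forall n : nat,
     INR (ell n) = (INR n * INR (lucas n) - INR (fib n)) / 5) /\
  asymp (fun n => INR (ell n)) (fun n => INR n / 5 * phi ^ n) /\
  asymp iF (fun n => INR n / (sqrt 5 * phi)).
Proof.
  split; [|split; [exact ell_closed_form | split; [exact asymp_ell | exact asymp_iF]]].
  intros x Hx. now apply is_lim_seq_Reals, ell_gf.
Qed.
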